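(* Let $B$ be a ring and $M$ a left $B$-module with endomorphism ring $S={}_B\mathrm{End}(M)$. If $M$ is a generator of $\sigma[M]$, then $M$ is a formally smooth $B$-$S$ bimodule.
   Context: Left $B$-linear maps are written on the right of arguments, so $S$ acts on $M$ on the right. For a $B$-$A$ bimodule $M$: ${}^*M={}_B\mathrm{Hom}(M,B)$ is an $A$-$B$ bimodule via $(m)(afb)=((ma)f)b$; $\mathrm{ev}_M:M\otimes_A{}^*M\to B$, $m\otimes f\mapsto(m)f$; $\mathcal{E}_{M,B}$ is the class of $B$-bimodule maps $f:Y\to Y'$ such that ${}_B\mathrm{Hom}(M,f)$ has a right inverse as an $A$-$B$ bimodule map; a $B$-bimodule $P$ is $\mathcal{E}_{M,B}$-projective if for every $f:Y\to Y'$ in $\mathcal{E}_{M,B}$ every $B$-bimodule map $P\to Y'$ factors through $f$; $M$ is a formally smooth bimodule if $\mathrm{Ker}(\mathrm{ev}_M)$ is $\mathcal{E}_{M,B}$-projective. $\sigma[M]$ is the full subcategory of left $B$-modules subgenerated by $M$ (isomorphic to submodules of quotients of direct sums of copies of $M$); $M$ generates $\sigma[M]$ if every module in $\sigma[M]$ is a quotient of a direct sum of copies of $M$. *)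

(* Modules over an arbitrary (possibly non-commutative) ring B.
   Left B-linear maps are written as functions; "m s" (right S-action on M)
   is the function application s m. *)
From Stdlib Require Lists.List.
From HB Require Import structures.
From mathcomp Require Import all_boot all_order all_algebra.
Set Implicit Arguments. Unset Strict Implicit. Unset Printing Implicit Defensive.
Import GRing.Theory.
Local Open Scope ring_scope.

Definition bimod_axioms (B : pzRingType) (Y : zmodType)
    (l : B -> Y -> Y) (r : Y -> B -> Y) : Prop :=
  (forall a b y, l (a * b) y = l a (l b y)) /\
  (forall y, l 1 y = y) /\
  (forall a y z, l a (y + z) = l a y + l a z) /\
  (forall a b y, l (a + b) y = l a y + l b y) /\
  (forall y a b, r y (a * b) = r (r y a) b) /\
  (forall y, r y 1 = y) /\
  (forall y z a, r (y + z) a = r y a + r z a) /\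
  (forall y a b, r y (a + b) = r y a + r y b) /\
  (forall a y b, r (l a y) b = l a (r y b)).

Record bimod (B : pzRingType) := Bimod {
  bm_sort :> zmodType;
  bm_l : B -> bm_sort -> bm_sort;
  bm_r : bm_sort -> B -> bm_sort;
  bm_ax : bimod_axioms bm_l bm_r }.

Definition bimod_map_on (B : pzRingType) (P Y : bimod B) (K : P -> Prop)
    (h : P -> Y) : Prop :=
  (forall x y, K x -> K y -> h (x + y) = h x + h y) /\
  (forall b x, K x -> h (bm_l b x) = bm_l b (h x)) /\
  (forall x b, K x -> h (bm_r x b) = bm_r (h x) b).

Definition bimod_map (B : pzRingType) (P Y : bimod B) (h : P -> Y) : Prop :=
  bimod_map_on (fun _ => True) h.

Definition additive_fun (U V : zmodType) (h : U -> V) : Prop :=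
  forall x y, h (x + y) = h x + h y.

Definition lend (B : pzRingType) (M : lmodType B) (s : M -> M) : Prop :=
  additive_fun s /\ forall b x, s (b *: x) = b *: s x.

Definition ldual (B : pzRingType) (M : lmodType B) (f : M -> B) : Prop :=
  additive_fun f /\ forall b x, f (b *: x) = b * f x.

Definition lhom (B : pzRingType) (M : lmodType B) (Y : bimod B) (phi : M -> Y)
  : Prop :=
  additive_fun phi /\ forall b x, phi (b *: x) = bm_l b (phi x).

(* f : Y -> Y' is a B-bimodule map and _B Hom(M, f) = (f \o _) has a right
   inverse g which is an S-B bimodule map _B Hom(M,Y') -> _B Hom(M,Y), where
   (s.phi.b)(m) = (phi (s m)) b. *)
Definition in_E (B : pzRingType) (M : lmodType B) (Y Y' : bimod B)
    (f : Y -> Y') : Prop :=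
  bimod_map f /\
  exists g : (M -> Y') -> (M -> Y),
    (forall phi, lhom phi -> lhom (g phi)) /\
    (forall phi psi, lhom phi -> lhom psi ->
       g (fun m => phi m + psi m) =1 (fun m => g phi m + g psi m)) /\
    (forall s phi, lend s -> lhom phi -> g (phi \o s) =1 g phi \o s) /\
    (forall phi b, lhom phi ->
       g (fun m => bm_r (phi m) b) =1 (fun m => bm_r (g phi m) b)) /\
    (forall phi, lhom phi -> f \o g phi =1 phi).

Definition E_projective_sub (B : pzRingType) (M : lmodType B) (P : bimod B)
    (K : P -> Prop) : Prop :=
  forall (Y Y' : bimod B) (f : Y -> Y'), in_E M f ->
  forall p : P -> Y', bimod_map_on K p ->
  exists h : P -> Y, bimod_map_on K h /\ forall x, K x -> f (h x) = p x.

(* tens m f stands for m (x) f (only meaningful for f in *M);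
   (s.f)(m) = f (s m), (f.b)(m) = f m * b. *)
Definition balanced_biadd (B : pzRingType) (M : lmodType B) (G : zmodType)
    (h : M -> (M -> B) -> G) : Prop :=
  (forall m m' f, ldual f -> h (m + m') f = h m f + h m' f) /\
  (forall m f g, ldual f -> ldual g ->
     h m (fun x => f x + g x) = h m f + h m g) /\
  (forall s m f, lend s -> ldual f -> h (s m) f = h m (f \o s)).

Definition is_tensor (B : pzRingType) (M : lmodType B) (T : bimod B)
    (tens : M -> (M -> B) -> T) : Prop :=
  balanced_biadd tens /\
  (forall b m f, ldual f -> tens (b *: m) f = bm_l b (tens m f)) /\
  (forall m f b, ldual f -> tens m (fun x => f x * b) = bm_r (tens m f) b) /\
  (forall (G : zmodType) (h : M -> (M -> B) -> G), balanced_biadd h ->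
     exists u : T -> G,
       (additive_fun u /\ forall m f, ldual f -> u (tens m f) = h m f) /\
       forall u' : T -> G, additive_fun u' ->
         (forall m f, ldual f -> u' (tens m f) = h m f) -> u' =1 u).

(* M is a formally smooth bimodule: Ker(ev_M) is E_{M,B}-projective, for
   (any realization of) the tensor product M (x)_S *M and
   ev_M : m (x) f |-> f m. *)
Definition formally_smooth (B : pzRingType) (M : lmodType B) : Prop :=
  forall (T : bimod B) (tens : M -> (M -> B) -> T), is_tensor tens ->
  forall ev : T -> B, additive_fun ev ->
    (forall m f, ldual f -> ev (tens m f) = f m) ->
    E_projective_sub M (fun t : T => ev t = 0).

Definition finsupp (I : Type) (M : zmodType) (x : I -> M) : Prop :=
  exists s : list I, forall i, x i <> 0 -> Stdlib.Lists.List.In i s.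

(* pi : M^(I) -> N is a B-linear epimorphism (M^(I) = finitely supported
   functions I -> M) *)
Definition sum_epi (B : pzRingType) (M N : lmodType B) (I : Type)
    (pi : (I -> M) -> N) : Prop :=
  (forall x y, finsupp x -> finsupp y ->
     pi (fun i => x i + y i) = pi x + pi y) /\
  (forall b x, finsupp x -> pi (fun i => b *: x i) = b *: pi x) /\
  (forall n, exists x, finsupp x /\ pi x = n).

Definition generated_by (B : pzRingType) (M N : lmodType B) : Prop :=
  exists (I : Type) (pi : (I -> M) -> N), sum_epi pi.

Definition in_sigma (B : pzRingType) (M N : lmodType B) : Prop :=
  exists (I : Type) (Q : lmodType B) (pi : (I -> M) -> Q) (iota : N -> Q),
    sum_epi pi /\ additive_fun iota /\
    (forall b x, iota (b *: x) = b *: iota x) /\ injective iota.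

Definition generates_sigma (B : pzRingType) (M : lmodType B) : Prop :=
  forall N : lmodType B, in_sigma M N -> generated_by M N.

From HB Require Import structures.
From mathcomp Require Import all_boot all_order all_algebra ring_quotient.
From mathcomp Require Import boolp classical_sets fsbigop.
Set Implicit Arguments. Unset Strict Implicit. Unset Printing Implicit Defensive.
Import GRing.Theory.
Local Open Scope ring_scope.

(* K := Ker(ev_M) is a left submodule of M (x)_S *M, which is spanned by pure
   tensors and hence generated by M; so K lies in sigma[M] and, M generating
   sigma[M], every k in K is a finite sum of phi_i(m_i) with phi_i : M -> K left
   B-linear.  Given f : Y -> Y' in E_{M,B}, with g splitting Hom(M, f), and a
   bimodule map p : K -> Y', put h(sum phi_i(m_i)) := sum g(p o phi_i)(m_i).
   This is well defined: the relations {v in M^n | sum phi_i(v_i) = 0} also lie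
   in sigma[M], so every relation among the m_i is a sum of images of maps
   sigma : M -> M^n with sum phi_i o sigma_i = 0, and S-linearity of g turns
   each of them into g(0) = 0.  Then h is a bimodule map lifting p, since g
   commutes with the right B-action and f o g = id. *)

Section AdditiveFun.
Variables (U V : zmodType) (h : U -> V).
Hypothesis hD : additive_fun h.

Lemma additive_fun0 : h 0 = 0.
Proof. by apply: (addrI (h 0)); rewrite -hD !addr0. Qed.

Lemma additive_funN x : h (- x) = - h x.
Proof. by apply: (addrI (h x)); rewrite -hD !subrr additive_fun0. Qed.

Lemma additive_fun_sum (I : Type) (r : seq I) (F : I -> U) :
  h (\sum_(i <- r) F i) = \sum_(i <- r) h (F i).
Proof.
elim: r => [|i r IHr]; first by rewrite !big_nil additive_fun0.
by rewrite !big_cons hD IHr.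
Qed.

End AdditiveFun.

Section BimodLmod.
Variables (B : pzRingType) (Y : bimod B).

Definition bimod_lmod : Type := Y.
HB.instance Definition _ := GRing.Zmodule.on bimod_lmod.

Lemma bimodlA a b (y : bimod_lmod) : bm_l a (bm_l b y) = bm_l (a * b) y.
Proof. by case: (bm_ax Y) => mulA _; rewrite mulA. Qed.
Lemma bimodl1 : left_id 1 (@bm_l B Y : B -> bimod_lmod -> bimod_lmod).
Proof. by case: (bm_ax Y) => _ []. Qed.
Lemma bimodlDr : right_distributive (@bm_l B Y : B -> bimod_lmod -> bimod_lmod) +%R.
Proof. by case: (bm_ax Y) => _ [_ []]. Qed.
Lemma bimodlDl (y : bimod_lmod) : {morph (@bm_l B Y)^~ y : a b / a + b}.
Proof. by move=> a b; case: (bm_ax Y) => _ [_ [_ [-> _]]]. Qed.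

HB.instance Definition _ := GRing.Zmodule_isLmodule.Build B bimod_lmod
  bimodlA bimodl1 bimodlDr bimodlDl.

Lemma bimodl0 a : bm_l a (0 : Y) = 0.
Proof. exact: (scaler0 _ a : a *: (0 : bimod_lmod) = 0). Qed.

Lemma bimodrD b : additive_fun (fun y : Y => bm_r y b).
Proof. by move=> y z; case: (bm_ax Y) => _ [_ [_ [_ [_ [_ [-> _]]]]]]. Qed.

Lemma bimodlr a (y : Y) b : bm_r (bm_l a y) b = bm_l a (bm_r y b).
Proof. by case: (bm_ax Y) => _ [_ [_ [_ [_ [_ [_ []]]]]]]. Qed.

End BimodLmod.

Definition linear_fun (R : pzRingType) (V W : lmodType R) (f : V -> W) : Prop :=
  additive_fun f /\ forall a v, f (a *: v) = a *: f v.

Section Kernel.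
Variables (R : pzRingType) (V W : lmodType R) (f : V -> W).

(* The proof argument only keys the canonical submodule structure below. *)
Definition kernel_pred of linear_fun f : {pred V} := fun v => f v == 0.

Lemma kernel_closed (hf : linear_fun f) : subsemimod_closed (kernel_pred hf).
Proof.
have [hD hZ] := hf; split; first split.
- by rewrite unfold_in /= (additive_fun0 hD).
- by move=> u v; rewrite !unfold_in /= hD => /eqP -> /eqP ->; rewrite addr0.
- by move=> a v; rewrite !unfold_in /= hZ => /eqP ->; rewrite scaler0.
Qed.

End Kernel.

HB.instance Definition _ R V W f hf :=
  GRing.isSubmodClosed.Build R V (@kernel_pred R V W f hf) (kernel_closed hf).

Definition kernel (R : pzRingType) (V W : lmodType R) (f : V -> W)
  (hf : linear_fun f) : Type := {v : V | v \in kernel_pred hf}.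
HB.instance Definition _ R V W f hf := SubChoice.on (@kernel R V W f hf).
HB.instance Definition _ R V W f hf :=
  [SubChoice_isSubLmodule of @kernel R V W f hf by <:].

Lemma list_InP (T : eqType) (x : T) (s : seq T) : reflect (List.In x s) (x \in s).
Proof.
elim: s => [|y s IHs] /=; first by constructor.
rewrite in_cons; apply: (iffP orP) => [[/eqP ->|/IHs]|[->|/IHs]]; by [left|right|left|right].
Qed.

Section SigmaClosure.
Variables (B : pzRingType) (M : lmodType B).

Lemma generated_in_sigma (N : lmodType B) : generated_by M N -> in_sigma M N.
Proof. by move=> [I [pi hpi]]; exists I, N, pi, id; do !split => //. Qed.

Lemma in_sigma_kernel (V W : lmodType B) (f : V -> W) (hf : linear_fun f) :
  in_sigma M V -> in_sigma M (kernel hf).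
Proof.
move=> [I [Q [pi [iota [hpi [iotaD [iotaZ iota_inj]]]]]]].
exists I, Q, pi, (iota \o val); split=> //; split; last split.
- by move=> x y; rewrite /= -iotaD.
- by move=> b x; rewrite /= -iotaZ.
- exact: inj_comp iota_inj val_inj.
Qed.

Lemma ffun_generated n : generated_by M {ffun 'I_n -> M}.
Proof.
exists 'I_n, (fun x => [ffun j => x j]); split; last split.
- by move=> x y _ _; apply/ffunP => j; rewrite !ffunE.
- by move=> b x _; apply/ffunP => j; rewrite !ffunE.
- move=> v; exists (fun j => v j); split; last by apply/ffunP => j; rewrite ffunE.
  by exists (enum 'I_n) => j _; apply/list_InP; rewrite mem_enum.
Qed.

Definition delta (I : Type) (V : zmodType) (i : I) (v : V) : I -> V :=
  fun j => if `[< j = i >] then v else 0.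

Lemma generated_sum_images (N : lmodType B) : generated_by M N ->
  forall n : N, exists r : seq ({phi : M -> N | linear_fun phi} * M),
    n = \sum_(x <- r) sval x.1 x.2.
Proof.
move=> [I [pi [piD [piZ pi_onto]]]] n.
have [x [[l supp_x] <-]] := pi_onto n.
have fs_delta i v : finsupp (delta i v).
  by exists [:: i] => j; rewrite /delta; case: asboolP => // ji _; left.
have pi_delta i : linear_fun (fun v => pi (delta i v)).
  split=> [v w|b v]; [rewrite -piD | rewrite -piZ]; try exact: fs_delta;
  by congr pi; apply/funext => j; rewrite /delta; case: asboolP; rewrite ?addr0 ?scaler0.
elim: l x supp_x => [|i l IHl] x supp_x.
  exists [::]; rewrite big_nil.
  have -> : x = fun _ => 0 by apply/funext => j; apply: contrapT => /supp_x.
  apply: (addrI (pi (fun _ => 0))); rewrite -piD ?addr0; try by exists [::].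
  by congr pi; apply/funext => j; rewrite addr0.
pose x' j := if `[< j = i >] then 0 else x j.
have supp_x' j : x' j <> 0 -> List.In j l.
  by rewrite /x'; case: asboolP => // ij /supp_x [ji|//]; case: ij.
have [r pi_x'] := IHl x' supp_x'.
exists ((exist _ _ (pi_delta i), x i) :: r).
rewrite big_cons /= -pi_x' -piD; [|exact: fs_delta|by exists l].
by congr pi; apply/funext => j; rewrite /delta /x'; case: asboolP => [->|_];
  rewrite ?addr0 ?add0r.
Qed.

Hypothesis Hgen : generates_sigma M.

Lemma relations_generated (N : lmodType B) n (phi : 'I_n -> M -> N) (m : 'I_n -> M) :
  (forall j, linear_fun (phi j)) -> \sum_(j < n) phi j (m j) = 0 ->
  exists s : seq ({sigma : M -> {ffun 'I_n -> M} |
                     linear_fun sigma /\ forall z, \sum_(j < n) phi j (sigma z j) = 0} * M),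
    forall j, m j = \sum_(y <- s) sval y.1 y.2 j.
Proof.
move=> phi_linear Sphi_m0.
pose Sphi (v : {ffun 'I_n -> M}) := \sum_(j < n) phi j (v j).
have Sphi_linear : linear_fun Sphi.
  split=> [v w|b v]; rewrite /Sphi ?scaler_sumr -?big_split; apply: eq_bigr => j _;
  by have [phiD phiZ] := phi_linear j; rewrite ffunE ?phiD ?phiZ.
have Lgen : generated_by M (kernel Sphi_linear).
  exact/Hgen/in_sigma_kernel/generated_in_sigma/ffun_generated.
have m_in : [ffun j => m j] \in kernel_pred Sphi_linear.
  by rewrite unfold_in /= /Sphi -[X in _ == X]Sphi_m0; apply/eqP/eq_bigr => j _; rewrite ffunE.
have [s m_E] := generated_sum_images Lgen (Sub [ffun j => m j] m_in : kernel Sphi_linear).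
have valD : additive_fun (fun v : kernel Sphi_linear => val v : {ffun 'I_n -> M}) by [].
have rel (y : {psi : M -> kernel Sphi_linear | linear_fun psi} * M) :
    linear_fun (fun z => val (sval y.1 z)) /\ forall z, Sphi (val (sval y.1 z)) = 0.
  have [yD yZ] := svalP y.1; split=> [|z]; last exact/eqP/(valP (sval y.1 z)).
  by split=> [z z'|b z]; rewrite ?yD ?yZ.
exists [seq (exist _ _ (rel y), y.2) | y <- s] => j.
have := congr1 (fun v : kernel Sphi_linear => val v j) m_E.
by rewrite /= ffunE big_map => ->; rewrite (additive_fun_sum valD) sum_ffunE.
Qed.

End SigmaClosure.

Section ZmodQuotient.
Variables (V : zmodType) (P : V -> Prop).
Hypotheses (P0 : P 0) (PB : forall x y, P x -> P y -> P (x - y)).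

Definition prop_pred : {pred V} := fun v => `[< P v >].

Lemma prop_pred_closed : zmod_closed prop_pred.
Proof.
split=> [|x y]; rewrite !unfold_in; first exact/asboolP.
by move=> /asboolP Px /asboolP Py; apply/asboolP/PB.
Qed.

HB.instance Definition _ := GRing.isZmodClosed.Build V prop_pred prop_pred_closed.

Lemma zmod_quotient_kernel : exists (G : zmodType) (q : V -> G),
  additive_fun q /\ forall v, q v = 0 <-> P v.
Proof.
have qD : additive_fun \pi_(Quotient.quot prop_pred)%qT by move=> x y; rewrite Quotient.pi_add.
exists (Quotient.quot prop_pred), \pi_(Quotient.quot prop_pred)%qT; split=> // v.
have := Quotient.idealrBE prop_pred v 0; rewrite subr0 (additive_fun0 qD) unfold_in => Pv_E.
by split=> [qv0|/asboolP]; [apply/asboolP; rewrite Pv_E qv0 | rewrite Pv_E => /eqP].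
Qed.

End ZmodQuotient.

Section FinSupp.
Variables (I : Type) (V : zmodType).

Lemma finsuppD (x y : I -> V) : finsupp x -> finsupp y -> finsupp (fun i => x i + y i).
Proof.
move=> [s supp_x] [s' supp_y]; exists (s ++ s') => i xy_i; apply: List.in_or_app.
case: (eqVneq (x i) 0) => [x0|/eqP/supp_x]; last by left.
by right; apply: supp_y => y0; apply: xy_i; rewrite x0 y0 addr0.
Qed.

Lemma finsuppN (x : I -> V) : finsupp x -> finsupp (fun i => - x i).
Proof.
by move=> [s supp_x]; exists s => i nx; apply: supp_x => x0; apply: nx; rewrite x0 oppr0.
Qed.

End FinSupp.

Lemma finsupp_seq (I : eqType) (V : zmodType) (x : I -> V) :
  finsupp x -> exists s : seq I, forall i, x i != 0 -> i \in s.
Proof. by move=> [s supp_x]; exists s => i /eqP /supp_x /list_InP. Qed.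

Section TensorProduct.
Variables (B : pzRingType) (M : lmodType B).
Variables (T : bimod B) (tens : M -> (M -> B) -> T).
Hypothesis Htens : is_tensor tens.
Variable ev : T -> B.
Hypothesis evD : additive_fun ev.
Hypothesis ev_tens : forall m f, ldual f -> ev (tens m f) = f m.

Local Notation dual := {classic {f : M -> B | ldual f}}.

Lemma tensDl f : ldual f -> additive_fun (tens^~ f).
Proof. by case: Htens => [[tensD _] _] fdual m m'; rewrite tensD. Qed.

Lemma tensZl b m f : ldual f -> tens (b *: m) f = b *: (tens m f : bimod_lmod T).
Proof. by case: Htens => _ [tensZ _] /tensZ. Qed.

Lemma tensMr m f b : ldual f -> tens m (fun x => f x * b) = bm_r (tens m f) b.
Proof. by case: Htens => _ [_ [tensM _]] /tensM. Qed.

Definition tens_sum (x : dual -> M) : bimod_lmod T :=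
  \sum_(i \in setT) tens (x i) (sval i).

Lemma tens_sumE (x : dual -> M) (s : seq dual) :
  (forall i, x i != 0 -> i \in s) ->
  tens_sum x = \sum_(i <- undup s) tens (x i) (sval i).
Proof.
move=> supp_x; rewrite fsbig_seq ?undup_uniq // /tens_sum (fsbig_widen _ setT) //.
move=> i [_ /=]; rewrite mem_undup => i_s.
have /eqP -> : x i == 0 by apply: contraT => /supp_x.
exact: additive_fun0 (tensDl (svalP i)).
Qed.

Lemma tens_sumD x y : finsupp x -> finsupp y ->
  tens_sum (fun i => x i + y i) = tens_sum x + tens_sum y.
Proof.
move=> /finsupp_seq [s supp_x] /finsupp_seq [s' supp_y].
have supp_x' i : x i != 0 -> i \in s ++ s' by rewrite mem_cat => /supp_x ->.
have supp_y' i : y i != 0 -> i \in s ++ s' by rewrite mem_cat => /supp_y ->; rewrite orbT.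
have supp_xy i : x i + y i != 0 -> i \in s ++ s'.
  by case: (eqVneq (x i) 0) => [->|/supp_x'//]; rewrite add0r => /supp_y'.
rewrite (tens_sumE supp_xy) (tens_sumE supp_x') (tens_sumE supp_y') -big_split.
by apply: eq_bigr => i _; exact: tensDl (svalP i) (x i) (y i).
Qed.

Lemma tens_sumZ b x : finsupp x -> tens_sum (fun i => b *: x i) = b *: tens_sum x.
Proof.
move=> /finsupp_seq [s supp_x].
have supp_bx i : b *: x i != 0 -> i \in s.
  by move=> bx; apply: supp_x; apply: contra_neq bx => ->; rewrite scaler0.
rewrite (tens_sumE supp_bx) (tens_sumE supp_x) scaler_sumr.
by apply: eq_bigr => i _; apply: tensZl (svalP i).
Qed.

Lemma tens_sum_delta (f : dual) m : tens_sum (delta f m) = tens m (sval f).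
Proof.
have supp_delta i : delta f m i != 0 -> i \in [:: f].
  by rewrite /delta; case: asboolP => [->|]; rewrite ?mem_seq1 ?eqxx ?eqxx.
by rewrite (tens_sumE supp_delta) /= big_seq1 /delta asboolT.
Qed.

Lemma tens_sum_onto t : exists x, finsupp x /\ tens_sum x = t.
Proof.
pose P t := exists x, finsupp x /\ tens_sum x = t.
have P0 : P 0.
  exists (fun _ => 0); split; first by exists [::].
  by rewrite (@tens_sumE _ [::]) ?big_nil ?eqxx.
have PB u v : P u -> P v -> P (u - v).
  move=> [x [fx <-]] [y [fy <-]]; exists (fun i => x i - y i).
  have fxy := finsuppD fx (finsuppN fy); split=> //.
  apply: (addIr (tens_sum y)); rewrite subrK -tens_sumD //.
  by congr tens_sum; apply: funext => i; rewrite subrK.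
(* Uniqueness in the universal property kills the projection onto T / P. *)
have [G [q [qD q0P]]] := zmod_quotient_kernel P0 PB.
apply/q0P; case: Htens => _ [_ [_ tens_univ]].
have bal0 : @balanced_biadd B M G (fun _ _ => 0) by split; last split=> *; rewrite ?addr0.
have [u [_ u_uniq]] := tens_univ G _ bal0.
have zeroE : (fun _ => 0) =1 u by apply: u_uniq => // x y; rewrite addr0.
have qE : q =1 u.
  apply: u_uniq => // m f fdual; apply/q0P.
  exists (delta (exist _ f fdual : dual) m); split; last exact: tens_sum_delta.
  by exists [:: exist _ f fdual : dual] => j; rewrite /delta; case: asboolP => // -> _; left.
by rewrite qE -zeroE.
Qed.

Lemma tens_sum_epi : sum_epi tens_sum.
Proof. by split; [exact: tens_sumD | split; [exact: tens_sumZ | exact: tens_sum_onto]]. Qed.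

Lemma tensor_generated : generated_by M (bimod_lmod T).
Proof. by exists dual, tens_sum; exact: tens_sum_epi. Qed.

Lemma tensor_sum_pure t : exists s : seq dual, exists x : dual -> M,
  t = \sum_(i <- s) tens (x i) (sval i).
Proof.
have [x [/finsupp_seq [s supp_x] <-]] := tens_sum_onto t.
by exists (undup s), x; exact: tens_sumE.
Qed.

Lemma evZ b (t : bimod_lmod T) : ev (b *: t) = b * ev t.
Proof.
have [s [x ->]] := tensor_sum_pure t.
rewrite scaler_sumr !(additive_fun_sum evD) mulr_sumr.
apply: eq_bigr => i _; rewrite -tensZl ?ev_tens; try exact: svalP i.
by case: (svalP i) => _ ->.
Qed.

Lemma evMr t b : ev (bm_r t b) = ev t * b.
Proof.
have [s [x ->]] := tensor_sum_pure t.
rewrite (additive_fun_sum (bimodrD b)) !(additive_fun_sum evD) mulr_suml.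
apply: eq_bigr => i _; have fdual := svalP i.
rewrite -tensMr ?ev_tens //; case: fdual => fD fZ.
by split=> [m m'|a m]; rewrite ?fD ?mulrDl ?fZ ?mulrA.
Qed.

Lemma ev_linear : linear_fun (ev : bimod_lmod T -> B^o).
Proof. by split=> //; exact: evZ. Qed.

End TensorProduct.

Section LiftThroughSplitting.
Variables (B : pzRingType) (M : lmodType B) (Y Y' : bimod B).
Variable g : (M -> Y') -> (M -> Y).
Hypothesis g_lhom : forall phi, lhom phi -> lhom (g phi).
Hypothesis g_add : forall phi psi, lhom phi -> lhom psi ->
  g (fun m => phi m + psi m) =1 (fun m => g phi m + g psi m).
Hypothesis g_S : forall s phi, lend s -> lhom phi -> g (phi \o s) =1 g phi \o s.

Lemma lhom_sum (I : Type) (r : seq I) (Phi : I -> M -> Y') :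
  (forall i, lhom (Phi i)) -> lhom (fun m => \sum_(i <- r) Phi i m).
Proof.
move=> Phi_lhom; split=> [m m'|b m]; elim: r => [|i r IHr];
  rewrite ?big_nil ?big_cons ?addr0 //.
- by have [-> _] := Phi_lhom i; rewrite IHr addrACA.
- by rewrite bimodl0.
- by have [_ ->] := Phi_lhom i; rewrite IHr (bimodlDr (Y := Y')).
Qed.

Lemma lhom0 : lhom (fun _ : M => 0 : Y').
Proof. by split=> [m m'|b m]; rewrite ?addr0 ?bimodl0. Qed.

Lemma g0 m : g (fun _ => 0) m = 0.
Proof.
apply: (addrI (g (fun _ => 0) m)); rewrite addr0 -(g_add lhom0 lhom0).
by congr g; apply: funext => m'; rewrite addr0.
Qed.

Lemma g_sum (I : Type) (r : seq I) (Phi : I -> M -> Y') :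
  (forall i, lhom (Phi i)) ->
  g (fun m => \sum_(i <- r) Phi i m) =1 (fun m => \sum_(i <- r) g (Phi i) m).
Proof.
move=> Phi_lhom; elim: r => [|i r IHr] m.
  by rewrite big_nil -(g0 m); congr g; apply: funext => m'; rewrite big_nil.
have -> : (fun m => \sum_(j <- i :: r) Phi j m) = (fun m => Phi i m + \sum_(j <- r) Phi j m).
  by apply: funext => m'; rewrite big_cons.
rewrite g_add; [by rewrite big_cons IHr | exact: Phi_lhom | exact: lhom_sum].
Qed.

Variables (N : lmodType B) (q : N -> bimod_lmod Y').
Hypothesis q_linear : linear_fun q.

Lemma lhom_linear_comp (phi : M -> N) : linear_fun phi -> lhom (q \o phi).
Proof.
case: q_linear => qD qZ [phiD phiZ].
by split=> [m m'|b m]; rewrite /= ?phiD ?qD ?phiZ ?qZ.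
Qed.

Lemma lhom_lend_comp (phi : M -> Y') (s : M -> M) : lhom phi -> lend s -> lhom (phi \o s).
Proof. by move=> [phiD phiZ] [sD sZ]; split=> [m m'|b m]; rewrite /= ?sD ?phiD ?sZ ?phiZ. Qed.

Hypothesis Hgen : generates_sigma M.

Lemma lift_sum_eq0 (r : seq ({phi : M -> N | linear_fun phi} * M)) :
  \sum_(x <- r) sval x.1 x.2 = 0 -> \sum_(x <- r) g (q \o sval x.1) x.2 = 0.
Proof.
rewrite !(big_tnth _ _ r) /=; set n := size r; set x_ := tnth _.
pose phi j := sval (x_ j).1.
have phi_linear j : linear_fun (phi j) := svalP (x_ j).1.
move=> /(relations_generated Hgen phi_linear) [s m_E].
transitivity (\sum_(j < n) \sum_(y <- s) g (q \o phi j) (sval y.1 y.2 j)).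
  apply: eq_bigr => j _; rewrite -/(phi j) m_E.
  have [gD _] := g_lhom (lhom_linear_comp (phi_linear j)).
  by rewrite (additive_fun_sum gD).
rewrite exchange_big /=; apply: big1 => y _.
have [[yD yZ] y_rel] := svalP y.1.
pose sigma j z := sval y.1 z j.
have sigma_lend j : lend (sigma j).
  by split=> [z z'|b z]; rewrite /sigma ?yD ?yZ ffunE.
transitivity (\sum_(j < n) g ((q \o phi j) \o sigma j) y.2).
  by apply: eq_bigr => j _; rewrite g_S //; exact: lhom_linear_comp.
rewrite -g_sum => [|j]; last exact: lhom_lend_comp (lhom_linear_comp _) (sigma_lend j).
have -> : (fun z => \sum_(j < n) ((q \o phi j) \o sigma j) z) = fun _ => 0.
  apply: funext => z; case: q_linear => qD _.
  by rewrite /= -(additive_fun_sum qD) y_rel (additive_fun0 qD).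
exact: g0.
Qed.
End LiftThroughSplitting.

Section KernelLift.
Variables (B : pzRingType) (M : lmodType B).
Hypothesis Hgen : generates_sigma M.
Variables (T : bimod B) (tens : M -> (M -> B) -> T).
Hypothesis Htens : is_tensor tens.
Variable ev : T -> B.
Hypothesis evD : additive_fun ev.
Hypothesis ev_tens : forall m f, ldual f -> ev (tens m f) = f m.
Variables (Y Y' : bimod B) (f : Y -> Y') (g : (M -> Y') -> (M -> Y)).
Hypothesis fD : additive_fun f.
Hypothesis g_lhom : forall phi, lhom phi -> lhom (g phi).
Hypothesis g_add : forall phi psi, lhom phi -> lhom psi ->
  g (fun m => phi m + psi m) =1 (fun m => g phi m + g psi m).
Hypothesis g_S : forall s phi, lend s -> lhom phi -> g (phi \o s) =1 g phi \o s.
Hypothesis g_r : forall phi b, lhom phi ->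
  g (fun m => bm_r (phi m) b) =1 (fun m => bm_r (g phi m) b).
Hypothesis fg : forall phi, lhom phi -> f \o g phi =1 phi.
Variable p : T -> Y'.
Hypothesis p_bimod : bimod_map_on (fun t : T => ev t = 0) p.

Local Notation K := (kernel (ev_linear Htens evD ev_tens)).

Lemma kernel_ev0 (k : K) : ev (val k) = 0.
Proof. exact/eqP/(valP k). Qed.

Definition p_K (k : K) : bimod_lmod Y' := p (val k).

Lemma p_K_linear : linear_fun p_K.
Proof.
case: p_bimod => pD [pZ _].
split=> [k k'|b k]; [exact: pD (kernel_ev0 k) (kernel_ev0 k') | exact: pZ (kernel_ev0 k)].
Qed.

Local Notation pres := (seq ({phi : M -> K | linear_fun phi} * M)).

Definition presents (r : pres) (t : T) : Prop := t = \sum_(x <- r) val (sval x.1 x.2).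

Lemma presents_exists t : ev t = 0 -> exists r, presents r t.
Proof.
move=> /eqP ev_t0.
have Kgen : generated_by M K.
  exact/Hgen/in_sigma_kernel/generated_in_sigma/(tensor_generated Htens).
have [r r_E] := generated_sum_images Kgen (Sub t ev_t0 : K).
exists r; rewrite /presents -(additive_fun_sum (h := fun k : K => val k : bimod_lmod T)) //.
by rewrite -r_E.
Qed.

Definition lift (r : pres) : Y := \sum_(x <- r) g (p_K \o sval x.1) x.2.

Lemma presents_cat r r' t t' : presents r t -> presents r' t' ->
  presents (r ++ r') (t + t').
Proof. by move=> -> ->; rewrite /presents big_cat. Qed.

Definition pres_opp (r : pres) : pres := [seq (x.1, - x.2) | x <- r].

Lemma presents_opp r t : presents r t -> presents (pres_opp r) (- t).
Proof.
move=> ->; rewrite /presents big_map -sumrN; apply: eq_bigr => x _ /=.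
by have [phiD _] := svalP x.1; rewrite (additive_funN phiD).
Qed.

Lemma lift_opp r : lift (pres_opp r) = - lift r.
Proof.
rewrite /lift big_map -sumrN; apply: eq_bigr => x _ /=.
have [gD _] := g_lhom (lhom_linear_comp p_K_linear (svalP x.1)).
exact: (additive_funN gD x.2).
Qed.

Lemma lift_presents r r' t : presents r t -> presents r' t -> lift r = lift r'.
Proof.
move=> t_r t_r'; apply/eqP; rewrite -subr_eq0 -lift_opp -big_cat /=.
apply/eqP/(lift_sum_eq0 g_lhom g_add g_S p_K_linear Hgen); apply: val_inj.
have := presents_cat t_r (presents_opp t_r'); rewrite subrr /presents => sum0.
by rewrite (additive_fun_sum (h := fun k : K => val k : bimod_lmod T)) // -sum0.
Qed.
Definition pres_scale b (r : pres) : pres := [seq (x.1, b *: x.2) | x <- r].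

Lemma presents_scale b r t : presents r t -> presents (pres_scale b r) (bm_l b t).
Proof.
move=> ->; rewrite /presents big_map -[bm_l b _]/(b *: _ : bimod_lmod T) scaler_sumr.
by apply: eq_bigr => x _ /=; have [_ ->] := svalP x.1.
Qed.

Lemma lift_scale b r : lift (pres_scale b r) = bm_l b (lift r).
Proof.
rewrite /lift big_map -[bm_l b _]/(b *: _ : bimod_lmod Y) scaler_sumr.
apply: eq_bigr => x _ /=.
by have [_ ->] := g_lhom (lhom_linear_comp p_K_linear (svalP x.1)).
Qed.

Lemma kernel_mulr_subproof b (k : K) :
  bm_r (val k : T) b \in kernel_pred (ev_linear Htens evD ev_tens).
Proof. by rewrite unfold_in /= (evMr Htens) // kernel_ev0 mul0r. Qed.

Definition kernel_mulr b (k : K) : K := Sub (bm_r (val k : T) b) (kernel_mulr_subproof b k).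

Lemma kernel_mulr_linear b (phi : M -> K) :
  linear_fun phi -> linear_fun (kernel_mulr b \o phi).
Proof.
move=> [phiD phiZ]; split=> [m m'|a m]; apply: val_inj => /=; rewrite ?phiD ?phiZ /=.
  exact: bimodrD.
exact: bimodlr.
Qed.

Definition pres_mulr b (r : pres) : pres :=
  [seq (exist _ _ (kernel_mulr_linear b (svalP x.1)), x.2) | x <- r].

Lemma presents_mulr b r t : presents r t -> presents (pres_mulr b r) (bm_r t b).
Proof. by move=> ->; rewrite /presents big_map (additive_fun_sum (bimodrD b)). Qed.

Lemma lift_mulr b r : lift (pres_mulr b r) = bm_r (lift r) b.
Proof.
rewrite /lift big_map (additive_fun_sum (bimodrD b)); apply: eq_bigr => x _ /=.
have -> : p_K \o (kernel_mulr b \o sval x.1) = fun m => bm_r (p_K (sval x.1 m)) b.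
  apply: funext => m; case: p_bimod => _ [_ pMr]; exact: pMr (kernel_ev0 _).
exact: g_r (lhom_linear_comp p_K_linear (svalP x.1)) x.2.
Qed.

Definition lift_at (t : T) : Y :=
  if pselect (exists r, presents r t) is left ex then lift (projT1 (cid ex)) else 0.

Lemma lift_atE r t : presents r t -> lift_at t = lift r.
Proof.
move=> t_r; rewrite /lift_at; case: pselect => [ex|]; last by case; exists r.
by case: (cid ex) => r' t_r' /=; exact: lift_presents t_r' t_r.
Qed.

Lemma f_lift r t : presents r t -> f (lift r) = p t.
Proof.
have [p_KD _] := p_K_linear.
move=> ->; rewrite -(additive_fun_sum (h := fun k : K => val k : bimod_lmod T)) //.
rewrite -/(p_K _) (additive_fun_sum p_KD) (additive_fun_sum fD).
by apply: eq_bigr => x _; exact: fg (lhom_linear_comp p_K_linear (svalP x.1)) x.2.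
Qed.

Lemma kernel_lift : exists h : T -> Y,
  bimod_map_on (fun t : T => ev t = 0) h /\ forall t, ev t = 0 -> f (h t) = p t.
Proof.
exists lift_at; split; last first.
  by move=> t /presents_exists [r t_r]; rewrite (lift_atE t_r); exact: f_lift.
split; last split.
- move=> t t' /presents_exists [r t_r] /presents_exists [r' t_r'].
  by rewrite (lift_atE (presents_cat t_r t_r')) (lift_atE t_r) (lift_atE t_r') /lift big_cat.
- move=> b t /presents_exists [r t_r].
  by rewrite (lift_atE (presents_scale b t_r)) (lift_atE t_r) lift_scale.
- move=> t b /presents_exists [r t_r].
  by rewrite (lift_atE (presents_mulr b t_r)) (lift_atE t_r) lift_mulr.
Qed.

End KernelLift.

Theorem mainTheorem11 (B : pzRingType) (M : lmodType B) :
  generates_sigma M -> formally_smooth M.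
Proof.
move=> Hgen T tens Htens ev evD ev_tens Y Y' f [[fD _] [g [g_lhom [g_add [g_S [g_r fg]]]]]].
exact: (kernel_lift Hgen Htens evD ev_tens (fun x y => fD x y I I) g_lhom g_add g_S g_r fg).
Qed.
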